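(* Let $p$ be a prime, $q=p^l$, $m\ge1$, $n=2m$. For $0\leqslant r<n(q-1)$, $I\subseteq M_r$ and $\overline{I}=M_r\setminus I$, the dual code (with respect to the standard inner product on $\mathbb{F}_q^{q^n}$) satisfies $$\mathcal{C}_q(r,I,n)^\perp=\mathcal{C}_q(n(q-1)-r,\overline{I},n).$$
   Context: Let $N=q^n-1$ and $\alpha$ a primitive element of $\mathbb{F}_{q^n}$. Every integer $0\le u\le q^n-1$ is written $u=\sum_{i=0}^{n-1}u_iq^i$, $u_i\in\{0,\dots,q-1\}$; $\mathrm{wt}_q(u)=\sum u_i$, $O(u)=\sum_{i\text{ odd}}u_i$, $E(u)=\sum_{i\text{ even}}u_i$. For $-1\le r<n(q-1)$, $Z_r=\{\alpha^u\mid 0<u\le q^n-1,\ \mathrm{wt}_q(u)\le n(q-1)-r-1\}$. For $0\le r\le n(q-1)$ and integer $k\ge0$, $\Theta^{(r)}_k=\{\alpha^u\mid 0\le u\le q^n-1,\ \mathrm{wt}_q(u)=n(q-1)-r,\ |O(u)-E(u)|=k\}$. $M_r$ is the set of even (resp. odd) integers $k\in[0,m(q-1)]$ when $r$ is even (resp. odd). For $0\le r<n(q-1)$, $I\subseteq M_r$: $\overline I=M_r\setminus I$, $Z_{r,I}=Z_r\cup\bigcup_{k\in\overline I}\Theta^{(r)}_k$. A cyclic code of length $N$ over $\mathbb{F}_q$ with zero set $Z$ is $\{(c_0,\dots,c_{N-1})\in\mathbb{F}_q^N\mid \sum_ic_i\beta^i=0\ \forall\beta\in Z\}$, coordinate $i$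 labelled by $\alpha^i$. $\mathcal{C}_q(r,I,n)^*$ is the cyclic code with zero set $Z_{r,I}$ and $\mathcal{C}_q(r,I,n)$ its extended code (coordinates indexed by $\mathbb{F}_{q^n}$, extra coordinate labelled $0$ equal to $-\sum_ic_i$). The generalized Reed–Muller code $\mathcal{R}_q(r,n)$ ($-1\le r<n(q-1)$) is the extended code of the cyclic code with zero set $Z_r$, and $\mathcal{R}_q(n(q-1),n)=\mathbb{F}_q^{q^n}$. By convention, $\mathcal{C}_q(n(q-1),I,n)=\mathcal{R}_q(n(q-1)-1,n)$ if $0\notin I$ and $\mathcal{C}_q(n(q-1),I,n)=\mathbb{F}_q^{q^n}$ if $0\in I$. *)

From HB Require Import structures.
From mathcomp Require Import all_boot all_order all_algebra all_field.
Set Implicit Arguments. Unset Strict Implicit. Unset Printing Implicit Defensive.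
Import GRing.Theory.
Local Open Scope ring_scope.

(* The field F_{q^n} is a finite field L with #|L| = q^n; F_q is realised as its
   unique subfield of order q, namely {x in L | x^q = x}. Codewords of length
   q^n are functions L -> L (coordinates indexed by F_{q^n}) with values in F_q. *)

Section Codes.
Variables (L : finFieldType) (q n m : nat) (alpha : L).

Definition digit (i u : nat) : nat := ((u %/ q ^ i) %% q)%N.
Definition wtq (u : nat) : nat := (\sum_(i < n) digit i u)%N.
Definition Osum (u : nat) : nat := (\sum_(i < n | odd i) digit i u)%N.
Definition Esum (u : nat) : nat := (\sum_(i < n | ~~ odd i) digit i u)%N.
Definition OEdiff (u : nat) : nat := ((Osum u - Esum u) + (Esum u - Osum u))%N.

Definition N : nat := (q ^ n - 1)%N.

Definition Zr (r : nat) : {set L} :=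
  [set b | [exists u : 'I_(q ^ n),
     [&& 0 < (u : nat), b == alpha ^+ u & wtq u + r + 1 <= n * (q - 1)]%N]].

Definition Theta (r k : nat) : {set L} :=
  [set b | [exists u : 'I_(q ^ n),
     [&& b == alpha ^+ u, wtq u == n * (q - 1) - r & OEdiff u == k]%N]].

Definition Mr (r : nat) : pred nat :=
  [pred k | (k <= m * (q - 1))%N && (odd k == odd r)].

Definition Ibar (r : nat) (I : pred nat) : pred nat :=
  [pred k | Mr r k && ~~ I k].

Definition ZrI (r : nat) (I : pred nat) : {set L} :=
  Zr r :|: \bigcup_(k < (m * (q - 1)).+1 | Ibar r I k) Theta r k.

Definition inFq (x : L) : bool := x ^+ q == x.

Definition cyclic_code (Z : {set L}) (c : 'I_N -> L) : bool :=
  [forall i, inFq (c i)] &&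
  [forall b in Z, \sum_(i < N) c i * b ^+ i == 0].

Definition ext_code (Z : {set L}) : {set {ffun L -> L}} :=
  [set c : {ffun L -> L} | cyclic_code Z (fun i : 'I_N => c (alpha ^+ i))
           && (c 0 == - \sum_(i < N) c (alpha ^+ i))].

Definition full_code : {set {ffun L -> L}} := [set c : {ffun L -> L} | [forall x, inFq (c x)]].

Definition RM (r : nat) : {set {ffun L -> L}} :=
  if (r < n * (q - 1))%N then ext_code (Zr r) else full_code.

(* C_q(r,I,n), with the paper's convention for r = n(q-1)
   (values for r > n(q-1) are irrelevant / never used) *)
Definition Ccode (r : nat) (I : pred nat) : {set {ffun L -> L}} :=
  if (r < n * (q - 1))%N then ext_code (ZrI r I)
  else if I 0%N then full_code else RM (n * (q - 1) - 1).

Definition dual (C : {set {ffun L -> L}}) : {set {ffun L -> L}} :=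
  [set d : {ffun L -> L} | [forall x, inFq (d x)] && [forall c in C, \sum_x c x * d x == 0]].

End Codes.

From mathcomp Require Import all_boot all_order all_algebra all_field.
From mathcomp Require Import zify.
Import GRing.Theory.
Set Implicit Arguments. Unset Strict Implicit. Unset Printing Implicit Defensive.

(* Both codes are described through power sums.  A word c : F_(q^n) -> F_q is
   determined by its power sums S_t(c) = sum_x c(x) x^t, 0 <= t <= N = q^n - 1, and
   C_q(r, I, n) consists of the words with S_t(c) = 0 for t in a set P of exponents
   (t = 0 accounting for the extension coordinate).  Membership of t in P depends only
   on the q-adic weight of t and on |O(t) - E(t)|; multiplication by q modulo N rotates
   the digits, which preserves both quantities because n is even, so P is a union of
   cyclotomic cosets.  For such P the dual of the code of P is the code of
   {s | N - s \notin P}: orthogonality comes from expanding c through its power sums,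
   and conversely a word orthogonal to the code is tested against the trace words
   x |-> Tr(b x^s).  Finally t |-> N - t complements every digit, sending the weight w
   to n(q - 1) - w and preserving |O - E|; this turns the exponent set of C_q(r, I, n)
   into that of C_q(n(q - 1) - r, I-bar, n). *)

(** * q-adic digits *)

Section Digits.
Variable q : nat.
Hypothesis q_gt1 : 1 < q.

Lemma q_gt0 : 0 < q. Proof. exact: ltnW. Qed.

Lemma digit0 u : digit q 0 u = u %% q.
Proof. by rewrite /digit expn0 divn1. Qed.

Lemma digitS i u : digit q i.+1 u = digit q i (u %/ q).
Proof. by rewrite /digit expnS divnMA. Qed.

Lemma digitn0 i : digit q i 0 = 0.
Proof. by rewrite /digit div0n mod0n. Qed.

Lemma digit_lt i u : digit q i u < q.
Proof. by rewrite /digit ltn_pmod ?q_gt0. Qed.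

Lemma digit_expansion n u : u < q ^ n -> u = \sum_(i < n) digit q i u * q ^ i.
Proof.
elim: n u => [|n IH] u hu; first by move: hu; rewrite big_ord0 expn0 ltnS leqn0 => /eqP.
rewrite big_ord_recl digit0 expn0 muln1.
under eq_bigr => i _ do rewrite lift0 digitS expnS mulnCA.
rewrite -big_distrr /= -IH; last by rewrite ltn_divLR ?q_gt0 // mulnC -expnS.
by rewrite addnC mulnC -divn_eq.
Qed.

Lemma digit_of_expansion n (d : nat -> nat) i :
  (forall j, j < n -> d j < q) -> i < n -> digit q i (\sum_(j < n) d j * q ^ j) = d i.
Proof.
elim: n d i => [|n IH] d [|i] // hd hi; rewrite big_ord_recl expn0 muln1;
  under eq_bigr => j _ do rewrite lift0 expnS mulnCA; rewrite -big_distrr /=.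
  by rewrite digit0 addnC mulnC modnMDl modn_small ?hd.
rewrite digitS addnC mulnC divnMDl ?q_gt0 // divn_small ?hd // addn0.
by apply: (IH (fun j => d j.+1)) => // j hj; apply: hd.
Qed.

Lemma expansion_max n : \sum_(i < n) (q - 1) * q ^ i = q ^ n - 1.
Proof.
elim: n => [|n IH]; first by rewrite big_ord0 expn0.
rewrite big_ord_recr /= IH expnS.
have : 0 < q ^ n by rewrite expn_gt0 q_gt0.
by move: (q ^ n) => x; have := q_gt1; nia.
Qed.

Lemma digit_compl n s i : s < q ^ n -> i < n ->
  digit q i (q ^ n - 1 - s) = q - 1 - digit q i s.
Proof.
move=> hs hi.
have -> : q ^ n - 1 - s = \sum_(j < n) (q - 1 - digit q j s) * q ^ j.
  have digit_sum : \sum_(j < n) (q - 1 - digit q j s) * q ^ j + \sum_(j < n) digit q j s * q ^ j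
                   = \sum_(j < n) (q - 1) * q ^ j.
    rewrite -big_split; apply: eq_bigr => j _ /=; rewrite -mulnDl subnK //.
    by have := digit_lt j s; lia.
  by move: digit_sum; rewrite -digit_expansion // expansion_max; lia.
by rewrite (@digit_of_expansion n (fun j => q - 1 - digit q j s)) // => j _; lia.
Qed.

Section DigitSums.
Variables (k : nat) (f : 'I_k -> nat).

Lemma sum_digit_le u : \sum_(j < k) digit q (f j) u <= k * (q - 1).
Proof.
rewrite -[k in _ <= k * _]card_ord -sum_nat_const.
by apply: leq_sum => j _; have := digit_lt (f j) u; lia.
Qed.

Lemma sum_digit_compl n s : (forall j, f j < n) -> s < q ^ n ->
  \sum_(j < k) digit q (f j) (q ^ n - 1 - s) = k * (q - 1) - \sum_(j < k) digit q (f j) s.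
Proof.
move=> hf hs; apply/esym/eqP; rewrite -(eqn_add2r (\sum_(j < k) digit q (f j) s)).
rewrite subnK ?sum_digit_le // -big_split -[k in k * _]card_ord -sum_nat_const /=.
by apply/eqP/eq_bigr => j _; rewrite digit_compl //; have := digit_lt (f j) s; lia.
Qed.

End DigitSums.

Lemma wtq_le n u : wtq q n u <= n * (q - 1).
Proof. exact: (sum_digit_le (@nat_of_ord n)). Qed.

Lemma wtq_compl n s : s < q ^ n -> wtq q n (q ^ n - 1 - s) = n * (q - 1) - wtq q n s.
Proof. exact: (sum_digit_compl (@ltn_ord n)). Qed.

Lemma wtq_eq0 n u : u < q ^ n -> (wtq q n u == 0) = (u == 0).
Proof.
move=> hu; apply/idP/eqP => [|->]; last by rewrite /wtq big1 // => i _; rewrite digitn0.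
rewrite /wtq sum_nat_eq0 => /forall_inP digits0.
by rewrite (digit_expansion hu) big1 // => i _; rewrite (eqP (digits0 i isT)).
Qed.

End Digits.

Lemma big_ord_odd m (F : nat -> nat) :
  \sum_(i < 2 * m | odd i) F i = \sum_(j < m) F (2 * j).+1.
Proof.
elim: m => [|m IH]; first by rewrite !big_ord0.
rewrite big_mkcond /= in IH; rewrite big_mkcond mulnS /= !big_ord_recr /= IH.
by rewrite mul2n odd_double /= addn0.
Qed.

Lemma big_ord_even m (F : nat -> nat) :
  \sum_(i < 2 * m | ~~ odd i) F i = \sum_(j < m) F (2 * j).
Proof.
elim: m => [|m IH]; first by rewrite !big_ord0.
rewrite big_mkcond /= in IH; rewrite big_mkcond mulnS /= !big_ord_recr /= IH.
by rewrite mul2n odd_double /= addn0.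
Qed.

Section EvenLength.
Variables q m : nat.
Hypothesis q_gt1 : 1 < q.
Local Notation n := (2 * m).

Lemma OsumE u : Osum q n u = \sum_(j < m) digit q (2 * j).+1 u.
Proof. exact: (big_ord_odd m (digit q ^~ u)). Qed.

Lemma EsumE u : Esum q n u = \sum_(j < m) digit q (2 * j) u.
Proof. exact: (big_ord_even m (digit q ^~ u)). Qed.

Lemma wtq_Osum_Esum u : wtq q n u = Osum q n u + Esum q n u.
Proof. by rewrite /wtq (bigID (fun i : 'I__ => odd i)). Qed.

Lemma Osum_le u : Osum q n u <= m * (q - 1).
Proof. by rewrite OsumE sum_digit_le. Qed.

Lemma Esum_le u : Esum q n u <= m * (q - 1).
Proof. by rewrite EsumE sum_digit_le. Qed.

Lemma OEdiff_le u : OEdiff q n u <= m * (q - 1).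
Proof. by rewrite /OEdiff; have := Osum_le u; have := Esum_le u; lia. Qed.

Lemma odd_OEdiff u : odd (OEdiff q n u) = odd (wtq q n u).
Proof.
rewrite wtq_Osum_Esum /OEdiff; set a := Osum q n u; set b := Esum q n u.
have -> : a + b = a - b + (b - a) + (minn a b).*2 by rewrite -addnn; lia.
by rewrite [RHS]oddD odd_double addbF.
Qed.

Lemma OEdiff_compl s : s < q ^ n -> OEdiff q n (q ^ n - 1 - s) = OEdiff q n s.
Proof.
have dig_lt (j : 'I_m) : (2 * j).+1 < n by have := ltn_ord j; lia.
have dig_lt' (j : 'I_m) : 2 * j < n by have := ltn_ord j; lia.
move=> hs; rewrite /OEdiff !OsumE !EsumE !sum_digit_compl // -OsumE -EsumE.
by have := Osum_le s; have := Esum_le s; lia.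
Qed.

End EvenLength.

(** * Multiplication by q modulo q^n - 1 *)

Definition rotq (q n t : nat) : nat := (t %% q ^ n.-1) * q + t %/ q ^ n.-1.

Lemma eq_of_modn_pos d a b : 0 < a <= d -> 0 < b <= d -> a = b %[mod d] -> a = b.
Proof.
have mod_pos c : 0 < c <= d -> c %% d = (if c == d then 0 else c).
  by case/andP=> _ hc; case: eqP => [->|/eqP hd]; rewrite ?modnn // modn_small // ltn_neqAle hd.
move=> ha hb; rewrite !mod_pos //.
by move: ha hb; case: eqP => [->|_]; case: eqP => [->|_] //; lia.
Qed.

Section Rotation.
Variable q : nat.
Hypothesis q_gt1 : 1 < q.
Let q_gt0 := q_gt0 q_gt1.

Lemma rotq_digit0 k t : digit q 0 (rotq q k.+1 t) = digit q k t.
Proof. by rewrite digit0 /rotq /= modnMDl. Qed.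

Lemma rotq_digitS k i t : t < q ^ k.+1 -> i < k ->
  digit q i.+1 (rotq q k.+1 t) = digit q i t.
Proof.
move=> ht hik; rewrite /rotq /= digitS divnMDl // divn_small ?addn0; last first.
  by rewrite ltn_divLR ?expn_gt0 ?q_gt0 // -expnS.
have qk_split : q ^ k = q ^ (k - i).-1 * q * q ^ i.
  by rewrite -expnSr prednK ?subn_gt0 // -expnD subnK // ltnW.
rewrite /digit [in t %/ q ^ i](divn_eq t (q ^ k)) qk_split mulnA.
by rewrite divnMDl ?expn_gt0 ?q_gt0 // mulnA modnMDl.
Qed.

Lemma rotq_mod k t : rotq q k.+1 t = t * q %[mod N q k.+1].
Proof.
have qk_gt0 : 0 < q ^ k by rewrite expn_gt0 q_gt0.
rewrite /N /rotq /= expnS [in X in _ = X %[mod _]](divn_eq t (q ^ k)).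
move: (q ^ k) qk_gt0 (t %/ q ^ k) (t %% q ^ k) => X X_gt0 a b.
have -> : (a * X + b) * q = a * (q * X - 1) + (b * q + a) by nia.
by rewrite modnMDl.
Qed.

Lemma rotq_range k t : 0 < t <= N q k.+1 -> 0 < rotq q k.+1 t <= N q k.+1.
Proof.
rewrite /rotq /N /= expnS => /andP[t_gt0 t_le].
have qk_gt0 : 0 < q ^ k by rewrite expn_gt0 q_gt0.
have t_mod := ltn_pmod t qk_gt0.
have t_div : t %/ q ^ k < q by rewrite ltn_divLR //; lia.
move: t_gt0 t_le (divn_eq t (q ^ k)) t_mod t_div.
move: (t %% q ^ k) (t %/ q ^ k) (q ^ k) qk_gt0 => b a X; nia.
Qed.

Lemma iter_rotq k n t : 0 < t <= N q n.+1 ->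
  0 < iter k (rotq q n.+1) t <= N q n.+1 /\ iter k (rotq q n.+1) t = t * q ^ k %[mod N q n.+1].
Proof.
move=> ht; elim: k => [|k [IHrange IHmod]] /=; first by rewrite expn0 muln1 ht.
split; first exact: rotq_range.
by rewrite rotq_mod -modnMml IHmod modnMml expnSr mulnA.
Qed.

Lemma rotq_invariant_mulq n (g : nat -> nat) k t v : 0 < n ->
  (forall u, u < q ^ n -> g (rotq q n u) = g u) ->
  0 < t <= N q n -> 0 < v <= N q n -> v = t * q ^ k %[mod N q n] -> g v = g t.
Proof.
case: n => // n _ g_rot ht hv v_mod; have [iter_range iter_mod] := iter_rotq k ht.
rewrite (eq_of_modn_pos hv iter_range); last by rewrite iter_mod.
elim: k {v_mod iter_range iter_mod} => [|k IH] //=.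
rewrite g_rot ?IH //; have [/andP[_ h] _] := iter_rotq k ht.
by move: h; rewrite /N; have := expn_gt0 q n.+1; rewrite q_gt0; lia.
Qed.

Lemma wtq_rotq n t : 0 < n -> t < q ^ n -> wtq q n (rotq q n t) = wtq q n t.
Proof.
case: n => // k _ ht; rewrite /wtq big_ord_recl rotq_digit0 big_ord_recr /= addnC.
by congr (_ + _); apply: eq_bigr => i _; rewrite /bump /= add1n rotq_digitS.
Qed.

Lemma Osum_rotq m t : t < q ^ (2 * m.+1) ->
  Osum q (2 * m.+1) (rotq q (2 * m.+1) t) = Esum q (2 * m.+1) t.
Proof.
rewrite OsumE EsumE mulnS add2n => ht.
by apply: eq_bigr => j _; rewrite rotq_digitS //; have := ltn_ord j; lia.
Qed.

Lemma Esum_rotq m t : t < q ^ (2 * m.+1) ->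
  Esum q (2 * m.+1) (rotq q (2 * m.+1) t) = Osum q (2 * m.+1) t.
Proof.
rewrite OsumE EsumE mulnS add2n => ht.
rewrite big_ord_recl muln0 rotq_digit0 big_ord_recr /= addnC; congr (_ + _).
by apply: eq_bigr => j _; rewrite /bump /= add1n mulnS add2n rotq_digitS //; have := ltn_ord j; lia.
Qed.

Lemma OEdiff_rotq m t : t < q ^ (2 * m.+1) ->
  OEdiff q (2 * m.+1) (rotq q (2 * m.+1) t) = OEdiff q (2 * m.+1) t.
Proof. by move=> ht; rewrite /OEdiff Osum_rotq // Esum_rotq // addnC. Qed.

End Rotation.

(** * Exponent sets of the codes *)

Definition cyclotomic_closed (q n : nat) (P : pred nat) : Prop :=
  forall k t v, 0 < t <= N q n -> 0 < v <= N q n -> v = t * q ^ k %[mod N q n] -> P t -> P v.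

Definition dual_pred (d : nat) (P : pred nat) : pred nat := fun s => ~~ P (d - s).

(* The exponents t in [0, N] with alpha^t in Z_{r,I}, together with t = 0. *)
Definition defining_set (q m r : nat) (I : pred nat) : pred nat := fun t =>
  (wtq q (2 * m) t + r < 2 * m * (q - 1)) ||
  (wtq q (2 * m) t == 2 * m * (q - 1) - r) && Ibar q m r I (OEdiff q (2 * m) t).

Lemma ltn_expq_N q n u : 0 < q -> (u < q ^ n) = (u <= N q n).
Proof.
move=> q_gt0; have : 0 < q ^ n by rewrite expn_gt0 q_gt0.
by rewrite /N; lia.
Qed.

Lemma N_gt0 q n : 1 < q -> 0 < n -> 0 < N q n.
Proof. by move=> q_gt1 n_gt0; rewrite /N subn_gt0 -[1]/(q ^ 0) ltn_exp2l. Qed.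

Section DefiningSet.
Variables q m : nat.
Hypotheses (q_gt1 : 1 < q) (m_gt0 : 0 < m).
Local Notation n := (2 * m).
Local Notation W := (2 * m * (q - 1)).

Lemma defining_set0 r I : r < W -> defining_set q m r I 0.
Proof.
by move=> r_lt; rewrite /defining_set /wtq big1 ?add0n ?r_lt // => i _; rewrite digitn0.
Qed.

Lemma defining_set_closed r I : cyclotomic_closed q n (defining_set q m r I).
Proof.
case: m m_gt0 => // m' _ k t v ht hv v_mod.
have n_gt0 : 0 < 2 * m'.+1 by [].
rewrite /defining_set (rotq_invariant_mulq q_gt1 n_gt0 (fun u => wtq_rotq q_gt1 n_gt0) ht hv v_mod).
by rewrite (rotq_invariant_mulq q_gt1 n_gt0 (@OEdiff_rotq q q_gt1 m') ht hv v_mod).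
Qed.

Lemma dual_defining_set r I s : r <= W -> s <= N q n ->
  dual_pred (N q n) (defining_set q m r I) s = defining_set q m (W - r) (Ibar q m r I) s.
Proof.
move=> r_le s_le; have s_lt : s < q ^ n by rewrite ltn_expq_N ?q_gt0.
rewrite /dual_pred /defining_set wtq_compl // OEdiff_compl //.
have := wtq_le q_gt1 n s; have := OEdiff_le m q_gt1 s; have := odd_OEdiff m q_gt1 s.
move: (wtq q n s) (OEdiff q n s) => w k k_odd k_le w_le.
have [w_lt|w_gt|w_r] := ltngtP w r.
- have -> : (W - w + r < W) = false by lia.
  have -> : (W - w == W - r) = false by lia.
  by have -> : w + (W - r) < W by lia.
- have -> : W - w + r < W by lia.
  have -> : (w + (W - r) < W) = false by lia.
  by have -> : (w == W - (W - r)) = false by lia.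
subst w; have r_Mr : Mr q m r k by rewrite /Mr /= k_le k_odd eqxx.
have W_r_Mr : Mr q m (W - r) k.
  by rewrite /Mr /= k_le k_odd oddB // oddM mul2n odd_double andFb addFb eqxx.
by rewrite /Ibar /= r_Mr W_r_Mr subKn // subnK // subnKC // ltnn !eqxx /= negbK.
Qed.

Lemma defining_set_top I s : s <= N q n -> defining_set q m W I s = (s == 0) && ~~ I 0.
Proof.
move=> s_le; rewrite /defining_set ltnNge leq_addl subnn wtq_eq0 ?ltn_expq_N ?q_gt0 //.
case: eqP => [->|] //=; rewrite /OEdiff /Osum /Esum !big1 => [|i _|i _]; try exact: digitn0.
by rewrite /Ibar /Mr /= oddM mul2n odd_double.
Qed.

End DefiningSet.

(* [s q^j + t = 0 (mod N)] forces [N - s = t q^(n - j) (mod N)], and closure gives [P (N - s)]. *)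
Lemma cyclotomic_closed_dvd_eq0 q n (P : pred nat) s t j : 1 < q -> P 0 ->
  cyclotomic_closed q n P -> s <= N q n -> t <= N q n -> j < n -> P t -> ~~ P (N q n - s) ->
  N q n %| s * q ^ j + t -> s * q ^ j + t = 0.
Proof.
move=> q_gt1 P0 P_closed s_le t_le j_lt Pt; set v := N q n - s => Pv /eqP e_mod.
apply/eqP; rewrite -leqn0 leqNgt; apply: contra Pv => e_gt0.
have qn_mod x : x * q ^ j * q ^ (n - j) = x %[mod N q n].
  have qn : q ^ n = (N q n).+1 by rewrite /N subn1 prednK // expn_gt0 ltnW.
  by rewrite -mulnA -expnD subnKC ?(ltnW j_lt) // qn mulnS addnC modnMDl.
have t_mod : t = v * q ^ j %[mod N q n].
  apply/eqP; rewrite -(eqn_modDr (s * q ^ j)) -mulnDl /v subnK // addnC.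
  by rewrite e_mod modnMr.
have [v0|v_gt0] := posnP v; first by rewrite v0.
have [t0|t_gt0] := posnP t.
  have v_N : v = N q n.
    apply: (@eq_of_modn_pos (N q n)); rewrite ?v_gt0 ?leq_subr ?leqnn ?N_gt0 //.
      exact: leq_ltn_trans j_lt.
    by rewrite modnn -qn_mod -modnMml -t_mod t0 mod0n mul0n mod0n.
  suff s0 : s = 0 by move: e_gt0; rewrite s0 t0.
  by move: v_N s_le; rewrite /v; have := N_gt0 q_gt1 (leq_ltn_trans (leq0n j) j_lt); lia.
apply: (P_closed (n - j) t v) => //; rewrite ?t_gt0 ?v_gt0 ?leq_subr //.
by rewrite -qn_mod -modnMml -t_mod modnMml.
Qed.

(** * Power sums over F_(q^n) *)

Lemma prime_power_gt1 p l : prime p -> 0 < l -> 1 < p ^ l.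
Proof. by move=> p_prime l_gt0; rewrite -[1](expn0 p) ltn_exp2l ?prime_gt1. Qed.

Section PowerSums.
Local Open Scope ring_scope.
Variables (L : finFieldType) (p l n : nat) (alpha : L).
Hypotheses (p_prime : prime p) (l_gt0 : (0 < l)%N) (n_gt0 : (0 < n)%N).
Hypothesis cardL : #|L| = ((p ^ l) ^ n)%N.
Hypothesis alpha_prim : (#|L|.-1).-primitive_root alpha.
Local Notation q := (p ^ l)%N.

Let q_gt1 : (1 < q)%N := prime_power_gt1 p_prime l_gt0.

Lemma cardL_N : #|L| = (N q n).+1.
Proof. by rewrite cardL /N subn1 prednK // expn_gt0 (q_gt0 q_gt1). Qed.

Lemma alpha_primN : (N q n).-primitive_root alpha.
Proof. by rewrite -[N q n]/((N q n).+1.-1) -cardL_N. Qed.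

Lemma alpha_neq0 : alpha != 0.
Proof. by rewrite (prim_root_eq0 alpha_primN) -lt0n N_gt0 ?q_gt1. Qed.

Lemma pcharL : p \in [pchar L].
Proof. by apply: (card_finPcharP (n := l * n)); rewrite // cardL expnM. Qed.

Lemma natr_card : (N q n).+1%:R = 0 :> L.
Proof.
by rewrite -cardL_N cardL -expnM natrX (pcharf0 pcharL) expr0n muln_eq0 !eqn0Ngt l_gt0 n_gt0.
Qed.

Lemma exprDqX j (x y : L) : (x + y) ^+ (q ^ j) = x ^+ (q ^ j) + y ^+ (q ^ j).
Proof. by apply: exprDn_pchar; rewrite -expnM pnatX pnatE // pcharL. Qed.

Lemma expr_sum_qX j (I : Type) (r : seq I) (P : pred I) (F : I -> L) :
  (\sum_(i <- r | P i) F i) ^+ (q ^ j) = \sum_(i <- r | P i) F i ^+ (q ^ j).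
Proof.
apply: (big_morph (fun x : L => x ^+ (q ^ j))); first exact: exprDqX.
by rewrite expr0n expn_eq0 (negbTE (lt0n_neq0 (q_gt0 q_gt1))).
Qed.

Lemma inFq_expqX j (x : L) : inFq q x -> x ^+ (q ^ j) = x.
Proof.
by move=> /eqP x_q; elim: j => [|j IH]; rewrite ?expn0 ?expr1 // expnS exprM x_q IH.
Qed.

Lemma inFq_sum (I : Type) (r : seq I) (P : pred I) (F : I -> L) :
  (forall i, inFq q (F i)) -> inFq q (\sum_(i <- r | P i) F i).
Proof.
move=> F_q; apply/eqP; rewrite -[X in _ ^+ X]expn1 expr_sum_qX.
by apply: eq_bigr => i _; rewrite expn1; apply/eqP/F_q.
Qed.

Lemma inFq_opp (x : L) : inFq q x -> inFq q (- x).
Proof.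
move=> /eqP x_q; have := exprDqX 1 x (- x).
rewrite subrr expn1 expr0n eqn0Ngt (q_gt0 q_gt1) x_q /= => x_sum.
by rewrite /inFq -addr_eq0 addrC -x_sum.
Qed.

Lemma expf_N_eq1 (x : L) : x != 0 -> x ^+ N q n = 1.
Proof.
by move=> x_neq0; apply: (mulfI x_neq0); rewrite -exprS -cardL_N expf_card mulr1.
Qed.

Lemma alpha_expr_eq t u : (0 < t <= N q n)%N -> (0 < u <= N q n)%N ->
  (alpha ^+ t == alpha ^+ u) = (t == u).
Proof.
move=> t_range u_range; apply/idP/eqP => [|-> //].
by rewrite (eq_prim_root_expr alpha_primN) => /eqP; exact: eq_of_modn_pos.
Qed.

Lemma sum_field_alpha (f : L -> L) :
  \sum_(x : L) f x = f 0 + \sum_(i < N q n) f (alpha ^+ i).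
Proof.
rewrite (bigD1 0) //=; congr (_ + _).
have alpha_inj : {in predT &, injective (fun i : 'I_(N q n) => alpha ^+ i)}.
  move=> i j _ _ /eqP; rewrite (eq_prim_root_expr alpha_primN) !modn_small // => /eqP.
  exact: val_inj.
rewrite -(big_imset _ alpha_inj); apply: eq_bigl => x /=; apply/idP/imsetP => [x_neq0|[i _ ->]].
  by have [i ->] := prim_rootP alpha_primN (expf_N_eq1 x_neq0); exists i.
by rewrite expf_neq0 // alpha_neq0.
Qed.

Lemma sum_expr_eq0 e : ((N q n %| e)%N -> e = 0%N) -> \sum_(x : L) x ^+ e = 0.
Proof.
case: e => [|e] /= e_ndvd.
  by under eq_bigr do rewrite expr0; rewrite sumr_const -[#|_|]/#|L| cardL_N natr_card.
rewrite sum_field_alpha expr0n add0r; under eq_bigr do rewrite exprAC.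
have g_neq1 : alpha ^+ e.+1 != 1.
  by rewrite -(prim_order_dvd alpha_primN); apply/negP => /e_ndvd.
have : (alpha ^+ e.+1 - 1) * \sum_(i < N q n) (alpha ^+ e.+1) ^+ i = 0.
  by rewrite -subrX1 exprAC (prim_expr_order alpha_primN) expr1n subrr.
by move/eqP; rewrite mulf_eq0 subr_eq0 (negbTE g_neq1) => /eqP.
Qed.

Lemma sum_expr_indicator (x y : L) :
  \sum_(i < (N q n).+1) x ^+ (N q n - i) * y ^+ i = (x != y)%:R.
Proof.
have := subrXX x y (N q n).+1; rewrite -cardL_N !expf_card cardL_N.
have i_le (i : 'I_(N q n).+1) : (i <= N q n)%N by rewrite -ltnS.
case: eqVneq => [<-|x_neq_y] /= xy_sum.
  under eq_bigr => i _ do rewrite -exprD subnK ?i_le //.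
  by rewrite sumr_const card_ord -[x ^+ _]mulr1 -mulrnAr natr_card mulr0.
by apply: (mulfI (_ : x - y != 0)); rewrite ?subr_eq0 // -xy_sum mulr1.
Qed.

Definition power_sum (c : {ffun L -> L}) (t : nat) : L := \sum_(x : L) c x * x ^+ t.

Lemma power_sum_interpolation (c : {ffun L -> L}) (y : L) :
  c y = power_sum c 0 - \sum_(i < (N q n).+1) power_sum c (N q n - i) * y ^+ i.
Proof.
have -> : c y = \sum_(x : L) c x * (1 - \sum_(i < (N q n).+1) x ^+ (N q n - i) * y ^+ i).
  rewrite (bigD1 y) //= sum_expr_indicator eqxx subr0 mulr1 big1 ?addr0 // => x x_neq_y.
  by rewrite sum_expr_indicator x_neq_y subrr mulr0.
under eq_bigr => x _ do rewrite mulrBr mulr1 mulr_sumr.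
rewrite sumrB /power_sum; under [in RHS]eq_bigr => x _ do rewrite expr0 mulr1.
congr (_ - _); rewrite exchange_big /=; apply: eq_bigr => i _.
by rewrite mulr_suml; apply: eq_bigr => x _; rewrite mulrA.
Qed.

Lemma power_sum_orthogonal (c d : {ffun L -> L}) : power_sum c 0 = 0 ->
  (forall i, (i <= N q n)%N -> power_sum c (N q n - i) = 0 \/ power_sum d i = 0) ->
  \sum_(x : L) c x * d x = 0.
Proof.
move=> c0 c_or_d.
under eq_bigr => y _ do rewrite (power_sum_interpolation c y) c0 sub0r mulNr mulr_suml.
rewrite sumrN exchange_big big1 ?oppr0 // => i _ /=.
under eq_bigr => y _ do rewrite -mulrA.
rewrite -mulr_sumr (eq_bigr (fun y => d y * y ^+ i)) => [|y _]; last exact: mulrC.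
rewrite -/(power_sum d i).
by have [|] := c_or_d i (ltn_ord i) => ->; rewrite ?mul0r ?mulr0.
Qed.

Definition psum_code (P : pred nat) : {set {ffun L -> L}} :=
  [set c : {ffun L -> L} | [forall x, inFq q (c x)] &&
           [forall t : 'I_(N q n).+1, P t ==> (power_sum c t == 0)]].

Lemma psum_codeP (P : pred nat) (c : {ffun L -> L}) :
  reflect ((forall x, inFq q (c x)) /\ (forall t, (t <= N q n)%N -> P t -> power_sum c t = 0))
          (c \in psum_code P).
Proof.
rewrite inE; apply: (iffP andP) => [[/forallP c_q /forallP c_P]|[c_q c_P]].
  by split=> // t t_le Pt; have := c_P (Ordinal (t_le : t < (N q n).+1)%N); rewrite /= Pt => /eqP.
split; first exact/forallP.
by apply/forallP => t; apply/implyP => Pt; apply/eqP/c_P; rewrite // -ltnS.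
Qed.

Lemma eq_psum_code (P P' : pred nat) :
  (forall t, (t <= N q n)%N -> P t = P' t) -> psum_code P = psum_code P'.
Proof.
move=> eqP'; apply/setP => c; apply/psum_codeP/psum_codeP => -[c_q c_P];
  split=> // t t_le; [rewrite -eqP' // | rewrite eqP' //]; exact: c_P.
Qed.

Lemma psum_code_orthogonal (P : pred nat) (c d : {ffun L -> L}) : P 0%N ->
  c \in psum_code P -> d \in psum_code (dual_pred (N q n) P) -> \sum_(x : L) c x * d x = 0.
Proof.
move=> P0 /psum_codeP[_ c_P] /psum_codeP[_ d_P]; apply: power_sum_orthogonal => [|i i_le].
  exact: c_P.
by case: (boolP (P (N q n - i)%N)) => Pi; [left; apply: c_P; rewrite ?leq_subr | right; apply: d_P].
Qed.

Definition trace (y : L) : L := \sum_(j < n) y ^+ (q ^ j).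

Lemma trace_sum (I : finType) (F : I -> L) : trace (\sum_i F i) = \sum_i trace (F i).
Proof. by rewrite /trace; under eq_bigr do rewrite expr_sum_qX; rewrite exchange_big. Qed.

Lemma traceZ (d y : L) : inFq q d -> trace (d * y) = d * trace y.
Proof.
by move=> d_q; rewrite /trace mulr_sumr; apply: eq_bigr => j _; rewrite exprMn (inFq_expqX _ d_q).
Qed.

Lemma trace_inFq (y : L) : inFq q (trace y).
Proof.
rewrite /inFq /trace -[X in _ ^+ X]expn1 expr_sum_qX expn1.
under eq_bigr do rewrite -exprM -expnSr.
case: n n_gt0 cardL => // k _ cardLk.
rewrite big_ord_recr big_ord_recl /= addrC -cardLk expf_card expn0 expr1.
by under [in X in _ == X]eq_bigr do rewrite /bump /= add1n.
Qed.

(* Otherwise the polynomial sum_j X^(q^j), of degree q^(n-1) < #|L|, vanishes on L. *)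
Lemma trace_nondegenerate (y : L) : (forall b, trace (b * y) = 0) -> y = 0.
Proof.
move=> trace_y0; apply/eqP/contraT => y_neq0.
have trace0 z : trace z = 0 by rewrite -(divfK y_neq0 z) trace_y0.
pose T : {poly L} := \sum_(j < n) 'X^(q ^ j).
have [k n_eq] : exists k, n = k.+1 by exists n.-1; rewrite prednK.
have T_neq0 : T != 0.
  apply/eqP => /(congr1 (fun p : {poly L} => p`_(q ^ k))); apply/eqP.
  rewrite coef0 coef_sum n_eq big_ord_recr /= coefXn eqxx big1 ?add0r ?oner_eq0 // => j _.
  by rewrite coefXn eqn_exp2l ?q_gt1 // gtn_eqF.
have T_size : (size T <= (q ^ k).+1)%N.
  apply: leq_trans (size_sum _ _ _) _; apply/bigmax_leqP => j _.
  by rewrite size_polyXn ltnS leq_pexp2l ?(q_gt0 q_gt1) // -ltnS -n_eq.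
have T_roots : all (root T) (enum L).
  apply/allP => z _; rewrite /root /T horner_sum.
  by under eq_bigr do rewrite hornerXn; rewrite -/(trace z) trace0.
have := max_poly_roots T_neq0 T_roots (enum_uniq L); rewrite -cardE cardL n_eq expnS.
move/(leq_trans)/(_ T_size); have := q_gt1; have : (0 < q ^ k)%N by rewrite expn_gt0 ltnW ?q_gt1.
by move: (q ^ k)%N => X; nia.
Qed.

(* d is tested against the trace words x |-> Tr(b x^s), which lie in the code of P
   because P is cyclotomic closed. *)
Lemma dual_psum_code_sub (P : pred nat) (d : {ffun L -> L}) : P 0%N ->
  cyclotomic_closed q n P -> d \in dual q (psum_code P) -> d \in psum_code (dual_pred (N q n) P).
Proof.
move=> P0 P_closed; rewrite inE => /andP[/forallP d_q /forall_inP d_orth].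
apply/psum_codeP; split=> // s s_le Ps; apply: trace_nondegenerate => b.
pose c := [ffun x : L => trace (b * x ^+ s)].
have c_code : c \in psum_code P.
  apply/psum_codeP; split=> [x|t t_le Pt]; first by rewrite ffunE trace_inFq.
  rewrite /power_sum; under eq_bigr => x _ do rewrite ffunE /trace mulr_suml.
  rewrite exchange_big big1 // => j _ /=.
  under eq_bigr => x _ do rewrite exprMn -exprM -mulrA -exprD.
  rewrite -mulr_sumr sum_expr_eq0 ?mulr0 //.
  exact: (cyclotomic_closed_dvd_eq0 q_gt1 P0 P_closed s_le t_le (ltn_ord j) Pt Ps).
apply/eqP; rewrite /power_sum mulr_sumr trace_sum.
rewrite (eq_bigr (fun x => c x * d x)) ?d_orth // => x _.
by rewrite ffunE [RHS]mulrC -traceZ ?d_q // mulrCA.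
Qed.

Theorem dual_psum_code (P : pred nat) : P 0%N -> cyclotomic_closed q n P ->
  dual q (psum_code P) = psum_code (dual_pred (N q n) P).
Proof.
move=> P0 P_closed; apply/setP => d; apply/idP/idP; first exact: dual_psum_code_sub.
move=> d_code; rewrite inE; apply/andP; split.
  by case/psum_codeP: d_code => d_q _; apply/forallP.
by apply/forall_inP => c c_code; apply/eqP; exact: psum_code_orthogonal c_code d_code.
Qed.

Lemma power_sum0 (c : {ffun L -> L}) : power_sum c 0 = c 0 + \sum_(i < N q n) c (alpha ^+ i).
Proof.
rewrite /power_sum sum_field_alpha expr0 mulr1.
by congr (_ + _); apply: eq_bigr => i _; rewrite expr0 mulr1.
Qed.

Lemma power_sum_alpha (c : {ffun L -> L}) t : (0 < t)%N ->
  power_sum c t = \sum_(i < N q n) c (alpha ^+ i) * (alpha ^+ t) ^+ i.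
Proof.
move=> t_gt0; rewrite /power_sum sum_field_alpha expr0n eqn0Ngt t_gt0 mulr0 add0r.
by apply: eq_bigr => i _; rewrite exprAC.
Qed.

Lemma alpha_expr_surj (b : L) : b != 0 -> exists2 t, (0 < t <= N q n)%N & b = alpha ^+ t.
Proof.
move=> b_neq0; have [i ->] := prim_rootP alpha_primN (expf_N_eq1 b_neq0).
have [i0|i_gt0] := posnP i.
  exists (N q n); first by rewrite N_gt0 ?q_gt1 ?leqnn.
  by rewrite i0 expr0 (prim_expr_order alpha_primN).
by exists i => //; rewrite i_gt0 ltnW.
Qed.

Lemma ext_code_psum_code (Z : {set L}) : 0 \notin Z ->
  ext_code q n alpha Z = psum_code (fun t => (t == 0)%N || (0 < t)%N && (alpha ^+ t \in Z)).
Proof.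
move=> Z_neq0; apply/setP => c; rewrite inE /cyclic_code.
apply/idP/psum_codeP => [/andP[/andP[/forallP c_q /forall_inP c_Z] /eqP c0]|[c_q c_P]].
  split=> [x|t t_le /orP[/eqP ->|/andP[t_gt0 t_Z]]].
  - have [->|/alpha_expr_surj[t _ ->]] := eqVneq x 0.
      by rewrite c0; apply/inFq_opp/inFq_sum.
    by have [i ->] := prim_rootP alpha_primN (expf_N_eq1 (expf_neq0 t alpha_neq0)); apply: c_q.
  - by rewrite power_sum0 c0 addNr.
  - by rewrite power_sum_alpha //; apply/eqP/c_Z.
rewrite -addr_eq0 -power_sum0 c_P // eqxx andbT; apply/andP; split; first exact/forallP.
apply/forall_inP => b b_Z; have [|t /andP[t_gt0 t_le] b_t] := alpha_expr_surj (b := b).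
  by apply: contraNneq Z_neq0 => <-.
by rewrite b_t -power_sum_alpha // c_P // t_gt0 -b_t b_Z orbT.
Qed.

Lemma mem_Zr r t : (0 < t <= N q n)%N ->
  (alpha ^+ t \in Zr q n alpha r) = (wtq q n t + r < n * (q - 1))%N.
Proof.
move=> t_range; have /andP[t_gt0 t_le] := t_range.
have t_lt : (t < q ^ n)%N by rewrite ltn_expq_N ?q_gt0 ?q_gt1.
rewrite inE; apply/existsP/idP => [[u /and3P[u_gt0 /eqP t_u wt_u]]|wt_lt].
  have u_range : (0 < u <= N q n)%N by rewrite u_gt0 -ltn_expq_N ?ltn_ord ?q_gt0 ?q_gt1.
  by move/eqP: t_u; rewrite alpha_expr_eq // => /eqP ->; rewrite -addn1.
by exists (Ordinal t_lt); rewrite /= addn1 wt_lt eqxx t_gt0.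
Qed.

Lemma mem_Theta r k t : (r < n * (q - 1))%N -> (0 < t <= N q n)%N ->
  (alpha ^+ t \in Theta q n alpha r k) = (wtq q n t == n * (q - 1) - r)%N && (OEdiff q n t == k).
Proof.
move=> r_lt t_range.
have t_lt : (t < q ^ n)%N by rewrite ltn_expq_N ?q_gt0 ?q_gt1; case/andP: t_range.
rewrite inE; apply/existsP/idP => [[u /and3P[/eqP t_u wt_u k_u]]|/andP[wt_t k_t]].
  have u_range : (0 < u <= N q n)%N.
    by rewrite lt0n -(wtq_eq0 q_gt1 (ltn_ord u)) (eqP wt_u) subn_eq0 -ltnNge r_lt -ltn_expq_N
      ?ltn_ord ?q_gt0 ?q_gt1.
  by move/eqP: t_u; rewrite alpha_expr_eq // => /eqP ->; rewrite wt_u k_u.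
by exists (Ordinal t_lt); rewrite /= eqxx wt_t k_t.
Qed.

End PowerSums.

(** * The codes C_q(r, I, n) *)

Section GRMCodes.
Variables (L : finFieldType) (p l m : nat) (alpha : L).
Hypotheses (p_prime : prime p) (l_gt0 : 0 < l) (m_gt0 : 0 < m).
Hypothesis cardL : #|L| = ((p ^ l) ^ (2 * m))%N.
Hypothesis alpha_prim : ((#|L|.-1).-primitive_root alpha)%R.
Local Notation q := (p ^ l).
Local Notation n := (2 * m).
Local Notation W := (2 * m * (q - 1)).

Let q_gt1 : 1 < q := prime_power_gt1 p_prime l_gt0.
Let n_gt0 : 0 < n. Proof. by rewrite muln_gt0 m_gt0. Qed.

Let W_gt0 : 0 < W. Proof. by rewrite muln_gt0 n_gt0 subn_gt0. Qed.
Let alpha_nonzero := alpha_neq0 p_prime l_gt0 n_gt0 cardL alpha_prim.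

Lemma zero_notin_Zr r : 0%R \notin Zr q n alpha r.
Proof.
rewrite inE; apply/existsP => -[u /and3P[_ /eqP/esym/eqP]].
by rewrite expf_eq0 (negbTE alpha_nonzero) andbF.
Qed.

Lemma zero_notin_ZrI r I : 0%R \notin ZrI q n m alpha r I.
Proof.
rewrite /ZrI in_setU negb_or zero_notin_Zr; apply/bigcupP => -[k _].
rewrite inE => /existsP[u /and3P[/eqP/esym/eqP]].
by rewrite expf_eq0 (negbTE alpha_nonzero) andbF.
Qed.

Lemma mem_ZrI r I t : r < W -> 0 < t <= N q n ->
  (alpha ^+ t \in ZrI q n m alpha r I)%R = defining_set q m r I t.
Proof.
move=> r_lt t_range; rewrite /ZrI in_setU (mem_Zr p_prime l_gt0 cardL alpha_prim) //.
congr (_ || _); apply/bigcupP/andP => [[k Ik]|[wt_t Ibar_t]].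
  by rewrite (mem_Theta p_prime l_gt0 cardL alpha_prim) // => /andP[-> /eqP ->].
have k_lt : OEdiff q n t < (m * (q - 1)).+1 by rewrite ltnS OEdiff_le.
by exists (Ordinal k_lt); rewrite ?(mem_Theta p_prime l_gt0 cardL alpha_prim) //= wt_t eqxx.
Qed.

Lemma Ccode_psum_code r I : r <= W ->
  Ccode q n m alpha r I = psum_code L p l n (defining_set q m r I).
Proof.
have ext_codeE := ext_code_psum_code p_prime l_gt0 n_gt0 cardL alpha_prim.
rewrite /Ccode leq_eqVlt => /orP[/eqP r_W|r_lt]; last first.
  rewrite r_lt ext_codeE ?zero_notin_ZrI //; apply: eq_psum_code => t t_le.
  by have [->|t_gt0] := posnP t; rewrite ?defining_set0 //= mem_ZrI ?t_gt0.
rewrite r_W ltnn; under eq_psum_code => t t_le do rewrite defining_set_top //.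
case: ifP => I0; last first.
  rewrite /RM subn1 ltn_predL W_gt0 ext_codeE ?zero_notin_Zr //.
  apply: eq_psum_code => t t_le; have [->|t_gt0] := posnP t; rewrite ?I0 //=.
  have t_lt : t < q ^ n by rewrite ltn_expq_N ?q_gt0.
  have wt_neq0 : wtq q n t != 0 by rewrite wtq_eq0 // -lt0n.
  by rewrite (@mem_Zr L p l n alpha p_prime l_gt0 cardL alpha_prim) ?t_gt0 //; lia.
apply/setP => c; rewrite !inE andbC; apply/idP/idP => [c_q|/andP[]//].
by rewrite c_q andbT; apply/forallP => t; rewrite andbF.
Qed.

End GRMCodes.

Unset Implicit Arguments.
Local Open Scope ring_scope.

Theorem theorem4p1 (p l m : nat) (L : finFieldType) (alpha : L)
    (r : nat) (I : pred nat) :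
  prime p -> (0 < l)%N -> (0 < m)%N ->
  #|L| = ((p ^ l) ^ (2 * m))%N ->
  (#|L|.-1).-primitive_root alpha ->
  (r < (2 * m) * (p ^ l - 1))%N ->
  {subset I <= Mr (p ^ l) m r} ->
  dual (p ^ l) (Ccode (p ^ l) (2 * m) m alpha r I) =
  Ccode (p ^ l) (2 * m) m alpha ((2 * m) * (p ^ l - 1) - r)%N (Ibar (p ^ l) m r I).
Proof.
(* Only I \cap M_r matters on either side, so I need not be a subset of M_r. *)
move=> p_prime l_gt0 m_gt0 cardL alpha_prim r_lt _.
have q_gt1 := prime_power_gt1 p_prime l_gt0.
have n_gt0 : (0 < 2 * m)%N by rewrite muln_gt0 m_gt0.
rewrite !(Ccode_psum_code p_prime l_gt0 m_gt0 cardL alpha_prim) ?leq_subr ?(ltnW r_lt) //.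
rewrite (dual_psum_code p_prime l_gt0 n_gt0 cardL alpha_prim) ?defining_set0 //;
  last exact: defining_set_closed.
by apply: eq_psum_code => s; apply: dual_defining_set; rewrite ?(ltnW r_lt).
Qed.
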